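(* Let $\alpha:[0,1]\to\mathrm{Mult}_n(\mathbb{C})$ be a path and let $\widetilde\alpha(0)\in\mathbb{C}^n$ satisfy $\mathrm{Mult}(\widetilde\alpha(0))=\alpha(0)$. If $\alpha$ has weakly decreasing shape, then there exist at most $n!$ paths $\widetilde\alpha:[0,1]\to\mathbb{C}^n$ starting at $\widetilde\alpha(0)$ with $\alpha=\mathrm{Mult}\circ\widetilde\alpha$.
   Context: $\mathrm{Mult}_n(\mathbb{C})=\mathbb{C}^n/\mathrm{Sym}_n$ is the space of $n$-element multisets in $\mathbb{C}$ and $\mathrm{Mult}$ the quotient map. The shape of a multiset is the integer partition of $n$ formed by its multiplicities; partitions are ordered by $\lambda\le\mu$ iff $\mu$ is obtained by summing blocks of a partition of the parts of $\lambda$. A path has weakly decreasing shape if $s\le t$ implies $\mathrm{Shape}(\alpha(s))\ge\mathrm{Shape}(\alpha(t))$. *)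

From HB Require Import structures.
From mathcomp Require Import all_boot all_order all_algebra.
From mathcomp Require Import all_classical all_reals all_analysis.
From mathcomp Require Import finmap multiset.
Set Implicit Arguments. Unset Strict Implicit. Unset Printing Implicit Defensive.
Import Order.TTheory GRing.Theory Num.Theory.
Import numFieldNormedType.Exports.
Local Open Scope classical_set_scope.
Local Open Scope ring_scope.
Open Scope mset_scope.
Local Open Scope classical_set_scope.
Local Open Scope ring_scope.

(* The complex plane C is modelled as R * R (product topology = Euclidean
   topology), for an arbitrary real field R : realType. *)
Definition CC (R : realType) : Type := (R * R)%type.

Notation Cn R n := {ptws 'I_n -> (R * R)%type}.

(* The quotient map Mult : C^n -> Mult_n(C) = C^n / Sym_n, realised as the
   multiset of the coordinates. *)
Definition Mult (R : realType) (n : nat) (x : Cn R n)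
  : {mset (R * R)%type} :=
  seq_mset [seq x i | i <- enum 'I_n].

Definition in_Mult (R : realType) (n : nat) (A : {mset (R * R)%type}) : Prop :=
  exists x : Cn R n, Mult x = A.

Definition I01 (R : realType) : set R := [set t : R | 0 <= t <= 1].

Arguments I01 R : clear implicits.

(* A path alpha : [0,1] -> Mult_n(C), where Mult_n(C) carries the quotient
   topology: U is open iff Mult^{-1}(U) is open in C^n.  Continuity of the
   restriction of alpha to [0,1] (subspace topology) is spelled out. *)
Definition Mult_path (R : realType) (n : nat) (alpha : R -> {mset (R * R)%type})
  : Prop :=
  (forall t, I01 R t -> in_Mult n (alpha t)) /\
  (forall U : set {mset (R * R)%type},
      open ((@Mult R n) @^-1` U : set (Cn R n)) ->
      exists V : set R, open V /\ I01 R `&` alpha @^-1` U = I01 R `&` V).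

(* Shape of a multiset: the list of multiplicities of its distinct elements
   (an integer partition, listed in some order). *)
Definition shape (T : choiceType) (A : {mset T}) : seq nat :=
  [seq A z | z <- finsupp A].

(* Partition order: l <= m iff m is obtained by summing the blocks of a
   partition of the parts of l (the blocks being the fibres of f). *)
Definition partition_le (l m : seq nat) : Prop :=
  exists f : 'I_(size l) -> 'I_(size m),
    forall j : 'I_(size m), nth 0%N m j = (\sum_(i | f i == j) nth 0%N l i)%N.

Definition weakly_decreasing_shape (R : realType) (alpha : R -> {mset (R * R)%type})
  : Prop :=
  forall s t, I01 R s -> I01 R t -> s <= t ->
    partition_le (shape (alpha t)) (shape (alpha s)).

Definition is_lift (R : realType) (n : nat) (alpha : R -> {mset (R * R)%type})
  (x0 : Cn R n) (f : R -> Cn R n) : Prop :=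
  {within I01 R, continuous f} /\ f 0 = x0 /\
  (forall t, I01 R t -> Mult (f t) = alpha t).

(* Along a path of weakly decreasing shape the number of distinct coordinates
   of a lift never decreases, and distinct coordinates stay distinct nearby;
   hence, read backwards in time, a coincidence between two coordinates of a
   lift persists.  A real induction from t = 1 down to t = 0 then shows that
   two lifts agreeing at t = 1 agree everywhere: just before a time where
   they agree, coordinate i of the first lift equals some coordinate j of the
   second, so at that time coordinates i and j of the second coincide, and
   this coincidence persists backwards.  A lift is thus determined by its
   endpoint, one of the at most n! rearrangements of a fixed point of C^n. *)
From Pilot Require Import Defs.
From HB Require Import structures.
From mathcomp Require Import all_boot all_order all_algebra all_fingroup.
From mathcomp Require Import all_classical all_reals all_analysis.
From mathcomp Require Import finmap multiset.
From mathcomp Require Import lra.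
Import Order.TTheory GRing.Theory Num.Theory.
Import numFieldNormedType.Exports.
Local Open Scope classical_set_scope.
Local Open Scope ring_scope.
Set Implicit Arguments. Unset Strict Implicit.

Section DistinctValues.
Variables (I : finType) (T : choiceType).

Definition nvalues (x : I -> T) : nat := #|` [fset x i | i in I]%fset|.

Lemma nvalues_lt (x y : I -> T) i0 j0 :
  (forall i j, x i = x j -> y i = y j) -> y i0 = y j0 -> x i0 != x j0 ->
  (nvalues y < nvalues x)%N.
Proof.
move=> xy yij xij.
pose h z := if [pick i | x i == z] is Some i then y i else z.
have hx i : h (x i) = y i.
  by rewrite /h; case: pickP => [j /eqP/xy //|/(_ i)]; rewrite eqxx.
rewrite /nvalues.
have -> : [fset y i | i in I]%fset = (h @` [fset x i | i in I])%fset.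
  apply/fsetP => z; apply/imfsetP/imfsetP => -[w] /=.
    by move=> _ ->; exists (x w); rewrite ?in_imfset ?hx.
  by move=> /imfsetP[i _ ->] ->; exists i; rewrite ?hx.
rewrite ltn_neqAle leq_imfset_card andbT.
apply: contra xij => /card_in_imfsetP h_inj.
by apply/eqP/h_inj; rewrite ?in_imfset ?hx.
Qed.

End DistinctValues.

Lemma partition_le_size (l m : seq nat) :
  all (fun k => 0 < k)%N m -> partition_le l m -> (size m <= size l)%N.
Proof.
move=> /allP m_pos [f fibres].
have f_onto j : j \in [set f i | i : 'I_(size l)]%SET.
  apply: contraTT (m_pos _ (mem_nth 0%N (ltn_ord j))) => /imsetP f_miss.
  rewrite -eqn0Ngt fibres big_pred0 // => i.
  by apply/eqP => fij; apply: f_miss; exists i.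
rewrite -[X in (X <= _)%N]card_ord -[X in (_ <= X)%N]card_ord.
by rewrite -(eq_card f_onto) leq_imset_card.
Qed.

Lemma shape_gt0 (T : choiceType) (A : {mset T}) :
  all (fun k => 0 < k)%N (Defs.shape A).
Proof. by apply/allP => k /mapP[z z_supp ->]; rewrite mset_gt0 -msuppE. Qed.

Lemma size_shape_Mult (R : realType) n (x : Cn R n) :
  size (Defs.shape (Mult x)) = nvalues x.
Proof.
rewrite size_map /nvalues; congr (size (enum_fset _)); apply/fsetP => z.
rewrite msuppE (perm_mem (perm_eq_seq_mset _)).
by apply/mapP/imfsetP => -[i _ ->]; exists i; rewrite ?mem_enum.
Qed.

Lemma downward_real_induction (R : realType) (a b : R) (P : R -> Prop) :
  P b ->
  (forall s, a <= s <= b -> \forall r \near s,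
     (s < r <= b -> P r -> P s) /\ (a <= r < s -> P s -> P r)) ->
  forall s, a <= s <= b -> P s.
Proof.
move=> Pb local s0 /andP[as0 s0b]; apply: contrapT => nPs0.
pose S := [set r | s0 <= r <= b /\ ~ P r].
have S_s0 : S s0 by rewrite /S /= lexx s0b.
have S_ub : ubound S b by move=> r [/andP[_ ->]].
have S_sup : has_sup S by split; [exists s0 | exists b].
set m := sup S.
have s0m : s0 <= m := sup_upper_bound S_sup S_s0.
have mb : m <= b := ge_sup (ex_intro _ s0 S_s0) S_ub.
have /nbhs_ballP[d /= d0 near_m] : \forall r \near m,
    (m < r <= b -> P r -> P m) /\ (a <= r < m -> P m -> P r).
  by apply: local; rewrite (le_trans as0 s0m) mb.
have [Pm|nPm] := pselect (P m).
  have [e S_e me] := sup_adherent d0 S_sup; case: (S_e) => /andP[s0e eb] nPe.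
  have em : e < m.
    rewrite lt_neqAle (sup_upper_bound S_sup S_e) andbT.
    by apply: contra_notN nPe => /eqP ->.
  apply: nPe; apply: (near_m e _).2 Pm; last by rewrite (le_trans as0 s0e) em.
  by rewrite /ball /= ger0_norm ?subr_ge0 ?(ltW em) //; rewrite -/m in me; lra.
have m_lt_b : m < b.
  by rewrite lt_neqAle mb andbT; apply: contra_notN nPm => /eqP ->.
pose r := Num.min (m + d / 2) b.
have mr : m < r by rewrite lt_min m_lt_b andbT; lra.
have rb : r <= b by rewrite ge_min lexx orbT.
apply: nPm; apply: (near_m r _).1.
- have : r <= m + d / 2 by rewrite ge_min lexx.
  by rewrite /ball /= ltr0_norm ?subr_lt0 //; lra.
- by rewrite mr rb.
- apply: contrapT => nPr.
  have : r <= m.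
    apply: sup_upper_bound => //; split => //.
    by rewrite rb (le_trans s0m (ltW mr)).
  by rewrite leNgt mr.
Qed.

Section Coincidences.
Variables (R : realType) (T : topologicalType) (I : finType).
Hypothesis T_hausdorff : hausdorff_space T.

Lemma near_coincidence (D : set R) (g h : R -> {ptws I -> T}) s :
  {within D, continuous g} -> {within D, continuous h} -> D s ->
  \forall t \near within D (nbhs s), forall i j, g t i = h t j -> g s i = h s j.
Proof.
move=> g_cont h_cont Ds.
have coord_cvg (f : R -> {ptws I -> T}) i : {within D, continuous f} ->
    (fun t => f t i) @ within D (nbhs s) --> f s i.
  move=> /subspace_continuousP/(_ s Ds) f_cvg.
  exact: cvg_comp f_cvg (@proj_continuous _ (fun=> T) i (f s)).
apply: filter_forall => i; apply: filter_forall => j.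
have [->|neq] := eqVneq (g s i) (h s j); first exact: nearW.
move: T_hausdorff; rewrite open_hausdorff => /(_ _ _ neq)[[A B] /=].
move=> -[/set_mem Agi /set_mem Bhj] [oA oB /eqP AB0].
have near_A := coord_cvg g i g_cont A (open_nbhs_nbhs (conj oA Agi)).
have near_B := coord_cvg h j h_cont B (open_nbhs_nbhs (conj oB Bhj)).
near=> t => eq_t.
have gA : A (g t i) by near: t; exact: near_A.
have hB : B (h t j) by near: t; exact: near_B.
suff : (A `&` B) (g t i) by rewrite AB0.
by split; rewrite // eq_t.
Unshelve. all: by end_near.
Qed.

Definition nvalues_nondecreasing (g : R -> I -> T) :=
  forall s t, I01 R s -> I01 R t -> s <= t -> (nvalues (g s) <= nvalues (g t))%N.

Lemma coincidence_backward (g : R -> {ptws I -> T}) u i j :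
  {within I01 R, continuous g} -> nvalues_nondecreasing g -> I01 R u ->
  g u i = g u j -> forall t, 0 <= t <= u -> g t i = g t j.
Proof.
move=> g_cont g_mono /andP[u0 u1] guij.
apply: downward_real_induction => // s /andP[s0 su].
have Is : I01 R s by rewrite /I01 /= s0 (le_trans su u1).
have := near_coincidence g_cont g_cont Is; rewrite near_withinE.
apply: filterS => r near_r; split.
  move=> /andP[sr ru] grij; apply: near_r grij.
  by rewrite /I01 /= (le_trans s0 (ltW sr)) (le_trans ru u1).
move=> /andP[r0 rs] gsij; apply/eqP; apply: contraT => neq.
have Ir : I01 R r by rewrite /I01 /= r0 (le_trans (ltW rs) (le_trans su u1)).
have := g_mono r s Ir Is (ltW rs).
by rewrite leqNgt (nvalues_lt (near_r Ir) gsij neq).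
Qed.

Lemma eq_paths_from_end (g h : R -> {ptws I -> T}) :
  {within I01 R, continuous g} -> {within I01 R, continuous h} ->
  nvalues_nondecreasing h -> (forall t i, I01 R t -> exists j, g t i = h t j) ->
  g 1 = h 1 -> forall t, I01 R t -> g t = h t.
Proof.
move=> g_cont h_cont h_mono g_in_h g1.
apply: downward_real_induction => // s /andP[s0 s1].
have Is : I01 R s by rewrite /I01 /= s0 s1.
have := near_coincidence g_cont h_cont Is; rewrite near_withinE.
apply: filterS => r near_r; split.
  move=> /andP[sr r1] grh; apply/funext => i; apply: near_r; last by rewrite grh.
  by rewrite /I01 /= (le_trans s0 (ltW sr)) r1.
move=> /andP[r0 rs] gsh; apply/funext => i.
have Ir : I01 R r by rewrite /I01 /= r0 (le_trans (ltW rs) s1).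
have [j grij] := g_in_h r i Ir.
rewrite grij; apply: (coincidence_backward h_cont h_mono Is).
  by rewrite -(near_r Ir _ _ grij) gsh.
by rewrite r0 ltW.
Qed.

End Coincidences.

Lemma Mult_eq_perm (R : realType) n (x y : Cn R n) :
  Mult x = Mult y -> exists p : 'S_n, forall i, x i = y (p i).
Proof.
move=> /eq_seq_msetP /(@tuple_permP _ _ _ [tuple y i | i < n])[p xy].
exists p => i.
have := congr1 (nth (x i) ^~ i) xy.
by rewrite (nth_map i) ?size_enum_ord // nth_ord_enum nth_mktuple tnth_mktuple.
Qed.

Lemma card_rearrangements (T : eqType) n k (z : 'I_k -> 'I_n -> T) :
  injective z -> (forall i j, exists p : 'S_n, forall a, z i a = z j (p a)) ->
  (k <= n`!)%N.
Proof.
case: k z => [//|k] z z_inj z_rearr.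
pose perm_of i := odflt 1%g [pick p : 'S_n | [forall a, z i a == z ord0 (p a)]].
have perm_ofP i a : z i a = z ord0 (perm_of i a).
  rewrite /perm_of; case: pickP => [p /forallP/(_ a)/eqP //|none].
  have [p zp] := z_rearr i ord0.
  by have /forallP[] := negbT (none p) => b; rewrite zp.
have perm_of_inj : injective perm_of.
  move=> i j eq_ij; apply: z_inj; apply/funext => a.
  by rewrite (perm_ofP i a) (perm_ofP j a) eq_ij.
by have := leq_card _ perm_of_inj; rewrite card_ord card_Sn.
Qed.

Lemma lift_nvalues_nondecreasing (R : realType) n
    (alpha : R -> {mset (R * R)%type}) (g : R -> Cn R n) :
  weakly_decreasing_shape alpha -> (forall t, I01 R t -> Mult (g t) = alpha t) ->
  nvalues_nondecreasing g.
Proof.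
move=> alpha_decr g_lift s t Is It st.
rewrite -!size_shape_Mult !g_lift //.
exact: partition_le_size (shape_gt0 _) (alpha_decr s t Is It st).
Qed.

Theorem corollary8p4 (R : realType) (n : nat)
  (alpha : R -> {mset (R * R)%type}) (x0 : Cn R n) :
  Mult_path n alpha ->
  Mult x0 = alpha 0 ->
  weakly_decreasing_shape alpha ->
  forall (k : nat) (f : 'I_k -> R -> Cn R n),
    (forall i, is_lift alpha x0 (f i)) ->
    (forall i j, i != j -> exists t, I01 R t /\ f i t <> f j t) ->
    (k <= n`!)%N.
Proof.
move=> _ _ alpha_decr k f f_lift f_distinct.
have f_cont i : {within I01 R, continuous f i} := (f_lift i).1.
have f_Mult i t : I01 R t -> Mult (f i t) = alpha t := (f_lift i).2.2 t.
have f_rearr i j t : I01 R t -> exists p : 'S_n, forall a, f i t a = f j t (p a).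
  by move=> It; apply: Mult_eq_perm; rewrite !f_Mult.
have I01_1 : I01 R 1 by rewrite /I01 /= ler01 lexx.
apply: (card_rearrangements (z := fun i => f i 1)); last first.
  by move=> i j; exact: f_rearr.
move=> i j f1_ij; apply/eqP; apply: contraT => /f_distinct[t [It neq]]; exfalso; apply: neq.
apply: (eq_paths_from_end _ (f_cont i) (f_cont j)) => //.
- exact: lift_nvalues_nondecreasing alpha_decr (f_Mult j).
- by move=> s a Is; have [p fp] := f_rearr i j s Is; exists (p a).
Qed.
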